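(* Let $M$ be a principally Goldie*-lifting right $R$-module and $N$ a submodule of $M$. If $(N+D)/N$ is a direct summand of $M/N$ for every cyclic direct summand $D$ of $M$, then $M/N$ is principally Goldie*-lifting.
   Context: $R$ is an associative ring with identity; modules are unital right $R$-modules. $K\ll L$ means $K$ is small in $L$. For submodules $X,Y$ of a module $L$, $X\,\beta^*\,Y$ in $L$ means $(X+Y)/X\ll L/X$ and $(X+Y)/Y\ll L/Y$. A module $L$ is principally Goldie*-lifting if for every cyclic submodule $X$ of $L$ there is a direct summand $D$ of $L$ with $X\,\beta^*\,D$. *)

(* Modules over a ring R; right R-modules are rendered as
   left modules over the converse ring R^c (so  a *: x  means  x·a). *)
From HB Require Import structures.
From mathcomp Require Import all_boot all_order all_algebra.
Set Implicit Arguments. Unset Strict Implicit. Unset Printing Implicit Defensive.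
Import GRing.Theory.
Local Open Scope ring_scope.

Section ModuleNotions.
Variables (S : pzRingType) (M : lmodType S).

Definition submod (X : M -> Prop) : Prop :=
  [/\ X 0, (forall x y, X x -> X y -> X (x + y)) & (forall a x, X x -> X (a *: x))].

Definition sumS (X Y : M -> Prop) : M -> Prop :=
  fun m => exists x y, [/\ X x, Y y & m = x + y].

Definition subS (X Y : M -> Prop) : Prop := forall m, X m -> Y m.

Definition eqS (X Y : M -> Prop) : Prop := forall m, X m <-> Y m.

Definition cyclicS (x : M) : M -> Prop := fun m => exists a : S, m = a *: x.

Definition is_cyclic (X : M -> Prop) : Prop := exists x, eqS X (cyclicS x).

Definition direct_summand (D : M -> Prop) : Prop :=
  submod D /\ exists D' : M -> Prop,
    [/\ submod D', (forall m, sumS D D' m) & (forall m, D m -> D' m -> m = 0)].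

(* K/X << M/X, for submodules X <= K of M.  By the correspondence theorem the
   submodules of M/X are exactly the T/X with X <= T <= M, and
   K/X + T/X = M/X  iff  K + T = M. *)
Definition small_quot (X K : M -> Prop) : Prop :=
  forall T, submod T -> subS X T -> (forall m, sumS K T m) -> forall m, T m.

Definition beta_star (X Y : M -> Prop) : Prop :=
  small_quot X (sumS X Y) /\ small_quot Y (sumS X Y).

Definition principally_Goldie_star_lifting : Prop :=
  forall x : M, exists D, direct_summand D /\ beta_star (cyclicS x) D.

End ModuleNotions.

Definition imageS (A B : Type) (f : A -> B) (X : A -> Prop) : B -> Prop :=
  fun b => exists a, X a /\ b = f a.

From HB Require Import structures.
From mathcomp Require Import all_boot all_order all_algebra.
Set Implicit Arguments. Unset Strict Implicit. Unset Printing Implicit Defensive.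
Import GRing.Theory.
Local Open Scope ring_scope.

(* Lift xR beta* D from M to the quotient through the projection f : M -> Q.
   Smallness passes to images because the preimage of a submodule T of Q that
   contains f(X) and supplements f(K) is a submodule of M containing X and
   supplementing K.  The extra hypothesis on cyclic summands applies because a
   direct summand D of M with xR beta* D is itself cyclic: if M = D + D', then
   xR + D' supplements xR + D and contains xR, so it is all of M, and D is
   generated by the D-component of x. *)

Section Submodules.
Variables (S : pzRingType) (M : lmodType S).

Lemma submodN (X : M -> Prop) x : submod X -> X x -> X (- x).
Proof. by case=> _ _ XZ Xx; rewrite -scaleN1r; apply: XZ. Qed.

Lemma submodB (X : M -> Prop) x y : submod X -> X x -> X y -> X (x - y).
Proof. by move=> subX Xx Xy; case: (subX) => _ XD _; exact: XD Xx (submodN subX Xy). Qed.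

Lemma submod_cyclicS (x : M) : submod (cyclicS x).
Proof.
split; first by exists 0; rewrite scale0r.
  by move=> _ _ [a ->] [b ->]; exists (a + b); rewrite scalerDl.
by move=> c _ [a ->]; exists (c * a); rewrite scalerA.
Qed.

Lemma submod_sumS (X Y : M -> Prop) : submod X -> submod Y -> submod (sumS X Y).
Proof.
move=> [X0 XD XZ] [Y0 YD YZ]; split; first by exists 0, 0; rewrite addr0.
  move=> _ _ [x [y [Xx Yy ->]]] [x' [y' [Xx' Yy' ->]]].
  by exists (x + x'), (y + y'); rewrite addrACA; split; [apply: XD | apply: YD |].
move=> a _ [x [y [Xx Yy ->]]]; exists (a *: x), (a *: y).
by rewrite scalerDr; split; [apply: XZ | apply: YZ |].
Qed.

Lemma sumS_l (X Y : M -> Prop) x : submod Y -> X x -> sumS X Y x.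
Proof. by case=> Y0 _ _ Xx; exists x, 0; rewrite addr0. Qed.

Lemma sumS_r (X Y : M -> Prop) y : submod X -> Y y -> sumS X Y y.
Proof. by case=> X0 _ _ Yy; exists 0, y; rewrite add0r. Qed.

Lemma small_quot_eqS (X X' K K' : M -> Prop) :
  eqS X X' -> eqS K K' -> small_quot X K -> small_quot X' K'.
Proof.
move=> eqX eqK smallXK T subT sXT sumKT; apply: smallXK => // [m /eqX | m].
  exact: sXT.
by have [k [t [/eqK Kk Tt ->]]] := sumKT m; exists k, t.
Qed.

Lemma eqS_sumSl (X X' Y : M -> Prop) : eqS X X' -> eqS (sumS X Y) (sumS X' Y).
Proof. by move=> eqX m; split=> -[x [y [/eqX Xx Yy ->]]]; exists x, y. Qed.

Lemma beta_star_eqSl (X X' Y : M -> Prop) :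
  eqS X X' -> beta_star X Y -> beta_star X' Y.
Proof.
move=> eqX [smallX smallY]; have eqXY := eqS_sumSl Y eqX.
by split; [apply: small_quot_eqS smallX | apply: small_quot_eqS smallY].
Qed.

Lemma summand_cyclic (x : M) (D : M -> Prop) :
  direct_summand D -> beta_star (cyclicS x) D -> is_cyclic D.
Proof.
move=> [subD [D' [subD' sumDD' capDD']]] [smallx _].
have subxD' := submod_sumS (submod_cyclicS x) subD'.
have sumxD' y : sumS (cyclicS x) D' y.
  apply: smallx subxD' _ _ y => [z|m]; first exact: sumS_l.
  have [d [d' [Dd D'd' ->]]] := sumDD' m.
  by exists d, d'; split=> //; exact: sumS_r (submod_cyclicS x) _.
have [e [e' [De D'e' Dx]]] := sumDD' x.
have [_ D'D D'Z] := subD'; have [_ _ DZ] := subD.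
exists e => y; split=> [Dy|[a ->]]; last exact: DZ.
have [_ [d' [[a ->] D'd' yE]]] := sumxD' y.
exists a; apply/eqP; rewrite -subr_eq0; apply/eqP; apply: capDD'.
  by apply: submodB => //; apply: DZ.
rewrite yE Dx scalerDr -(addrA (a *: e)) addrC addrK.
by apply: D'D => //; apply: D'Z.
Qed.

End Submodules.

Section SurjectiveImage.
Variables (S : pzRingType) (M Q : lmodType S) (f : {linear M -> Q}).
Hypothesis f_surj : forall q : Q, exists m : M, f m = q.

Lemma submod_preimage (T : Q -> Prop) : submod T -> submod (fun m => T (f m)).
Proof.
move=> [T0 TD TZ]; split; first by rewrite linear0.
  by move=> x y Tx Ty; rewrite linearD; apply: TD.
by move=> a x Tx; rewrite linearZ; apply: TZ.
Qed.

Lemma small_quot_image (X K : M -> Prop) :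
  small_quot X K -> small_quot (imageS f X) (imageS f K).
Proof.
move=> smallXK T subT sXT sumKT q; have [m <-] := f_surj q.
apply: smallXK (submod_preimage subT) _ _ m => [x Xx | x].
  by apply: sXT; exists x.
have [_ [t [[k [Kk ->]] Tt fx]]] := sumKT (f x).
exists k, (x - k); split=> //; last by rewrite addrC subrK.
by rewrite linearB fx addrAC subrr add0r.
Qed.

Lemma imageS_sumS (X Y : M -> Prop) :
  eqS (imageS f (sumS X Y)) (sumS (imageS f X) (imageS f Y)).
Proof.
move=> q; split.
  by move=> [_ [[x [y [Xx Yy ->]]] ->]]; exists (f x), (f y); rewrite linearD;
     split=> //; [exists x | exists y].
move=> [_ [_ [[x [Xx ->]] [y [Yy ->]] ->]]].
by exists (x + y); rewrite linearD; split=> //; exists x, y.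
Qed.

Lemma beta_star_image (X Y : M -> Prop) :
  beta_star X Y -> beta_star (imageS f X) (imageS f Y).
Proof.
move=> [smallX smallY]; have eqXY := imageS_sumS X Y.
split; [apply: small_quot_eqS (small_quot_image smallX)
       | apply: small_quot_eqS (small_quot_image smallY)] => //.
Qed.

Lemma imageS_cyclicS (x : M) : eqS (imageS f (cyclicS x)) (cyclicS (f x)).
Proof.
move=> q; split=> [[_ [[a ->] ->]] | [a ->]]; first by exists a; rewrite linearZ.
by exists (a *: x); split; [exists a | rewrite linearZ].
Qed.

End SurjectiveImage.

Theorem proposition3p10 (R : pzRingType) (M : lmodType R^c) (N : M -> Prop)
    (Q : lmodType R^c) (f : {linear M -> Q}) :
  principally_Goldie_star_lifting M ->
  submod N ->
  (forall q : Q, exists m : M, f m = q) ->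
  (forall m : M, f m = 0 <-> N m) ->
  (forall D : M -> Prop, direct_summand D -> is_cyclic D ->
     direct_summand (imageS f D)) ->
  principally_Goldie_star_lifting Q.
Proof.
move=> liftM _ f_surj _ summand_image q.
have [m <-] := f_surj q.
have [D [summandD betaD]] := liftM m.
exists (imageS f D); split.
  exact: summand_image summandD (summand_cyclic summandD betaD).
exact: beta_star_eqSl (imageS_cyclicS f m) (beta_star_image f_surj betaD).
Qed.
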